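(* Let $\mathbb{F}\in\{\mathbb{R},\mathbb{C}\}$, let $m\le n\le 2m$, and let $\ell$ be an integer with $n-m\le\ell\le\lfloor n/2\rfloor$. Let $X_{11}$, $X_{22}$, $Y$ be nonsingular matrices over $\mathbb{F}$ of sizes $(n-\ell)\times(n-\ell)$, $(m+\ell-n)\times(m+\ell-n)$ and $\ell\times\ell$ respectively, and let $X_{12}$ be an arbitrary $(n-\ell)\times(m+\ell-n)$ matrix over $\mathbb{F}$. Define the $m\times n$ matrices $$A=\begin{pmatrix}X_{11}&X_{12}&O\\ O&X_{22}&O\end{pmatrix},\qquad B=\begin{pmatrix}O&Y\\ O&O\end{pmatrix},$$ where in $A$ the row blocks have sizes $n-\ell$, $m+\ell-n$ and the column blocks have sizes $n-\ell$, $m+\ell-n$, $n-m$, and in $B$ the row blocks have sizes $\ell$, $m-\ell$ and the column blocks have sizes $n-\ell$, $\ell$. Then $\mathrm{rank}_{\mathbb{F}}(A;B)=m+\ell$.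
   Context: $(A;B)$ denotes the $m\times n\times 2$ tensor with slices $A,B$. A rank-one such tensor has the form $(\alpha\,\mathbf{a}\mathbf{b}^T;\beta\,\mathbf{a}\mathbf{b}^T)$ with nonzero $\mathbf{a}\in\mathbb{F}^m$, $\mathbf{b}\in\mathbb{F}^n$, $(\alpha,\beta)\ne0$; $\mathrm{rank}_{\mathbb{F}}$ is the minimal number of rank-one tensors over $\mathbb{F}$ summing slicewise to the tensor. *)

From HB Require Import structures.
From mathcomp Require Import all_boot all_order all_algebra.
Set Implicit Arguments. Unset Strict Implicit. Unset Printing Implicit Defensive.
Import Order.TTheory GRing.Theory Num.Theory.
Local Open Scope ring_scope.

(* Entry (i,j) of X, with natural-number indices; 0 outside the matrix. *)
Definition mxget (R : nmodType) (p q : nat) (X : 'M[R]_(p, q)) (i j : nat) : R :=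
  match @insub nat (fun k => k < p)%N _ i, @insub nat (fun k => k < q)%N _ j with
  | Some i', Some j' => X i' j'
  | _, _ => 0
  end.

(* A sum of r rank-one tensors (alpha a b^T ; beta a b^T) equals (A;B). *)
Definition tensor_rank_le (F : fieldType) (m n : nat) (A B : 'M[F]_(m, n)) (r : nat) : Prop :=
  exists (a : 'I_r -> 'cV[F]_m) (b : 'I_r -> 'cV[F]_n) (al be : 'I_r -> F),
    (forall k, [/\ a k != 0, b k != 0 & (al k != 0) || (be k != 0)]) /\
    A = \sum_(k < r) al k *: (a k *m (b k)^T) /\
    B = \sum_(k < r) be k *: (a k *m (b k)^T).

Definition tensor_rank_eq (F : fieldType) (m n : nat) (A B : 'M[F]_(m, n)) (r : nat) : Prop :=
  tensor_rank_le A B r /\ forall r', tensor_rank_le A B r' -> (r <= r')%N.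

Definition matA (F : fieldType) (m n l : nat)
  (X11 : 'M[F]_(n - l)) (X12 : 'M[F]_(n - l, m + l - n)) (X22 : 'M[F]_(m + l - n))
  : 'M[F]_(m, n) :=
  \matrix_(i < m, j < n)
    if (i < n - l)%N then
      (if (j < n - l)%N then mxget X11 i j
       else if (j < m)%N then mxget X12 i (j - (n - l)) else 0)
    else
      (if ((n - l <= j) && (j < m))%N then mxget X22 (i - (n - l)) (j - (n - l)) else 0).

Definition matB (F : fieldType) (m n l : nat) (Y : 'M[F]_l) : 'M[F]_(m, n) :=
  \matrix_(i < m, j < n)
    if ((i < l) && (n - l <= j))%N then mxget Y i (j - (n - l)) else 0.

Definition thm7_prop (F : fieldType) : Prop :=
  forall (m n l : nat), (m <= n)%N -> (n <= 2 * m)%N ->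
  (n - m <= l)%N -> (l <= n./2)%N ->
  forall (X11 : 'M[F]_(n - l)) (X12 : 'M[F]_(n - l, m + l - n))
         (X22 : 'M[F]_(m + l - n)) (Y : 'M[F]_l),
  X11 \in unitmx -> X22 \in unitmx -> Y \in unitmx ->
  tensor_rank_eq (@matA F m n l X11 X12 X22) (@matB F m n l Y) (m + l).

From HB Require Import structures.
From mathcomp Require Import all_boot all_order all_algebra zify.
Set Implicit Arguments. Unset Strict Implicit. Unset Printing Implicit Defensive.
Import Order.TTheory GRing.Theory Num.Theory.
Local Open Scope ring_scope.

(* The argument works over any field F, so it covers F = R and F = C
   (modelled by real closed and numeric algebraically closed fields).

   Upper bound: every row of A is nonzero (X11, X22 are invertible), as is
   each of the first l rows of B (Y is invertible), while the other rows
   of B vanish; writing A and B as sums of their rows gives m + l rank-one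
   terms ([tensor_rank_le_rows], glued by subadditivity [tensor_rank_le_add]).

   Lower bound (substitution method, [substitution_bound]): if (A;B) is a sum
   of R rank-one terms and A C has full column rank p for some n x p matrix C,
   then for some Yx the residual matrix [A - A C Yx | B - B C Yx] has rank
   at most R - p.  With C selecting the first n - l columns,
   A C has rank n - l and B C = 0; the residual [A - A C Yx | B] still contains
   the block upper triangular submatrix [Y * ; 0 X22] of rank l + (m + l - n)
   ([residual_rank]).  Hence R >= (n - l) + l + (m + l - n) = m + l. *)

Lemma split_lshift m n (i : 'I_m) : split (lshift n i) = inl i.
Proof. exact: (unsplitK (inl _ i)). Qed.

Lemma split_rshift m n (i : 'I_n) : split (rshift m i) = inr i.
Proof. exact: (unsplitK (inr _ i)). Qed.

Lemma mxget_val (R : nmodType) p q (X : 'M[R]_(p, q)) (i : 'I_p) (j : 'I_q) i' j' :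
  i' = i -> j' = j -> mxget X i' j' = X i j.
Proof.
move=> -> ->; rewrite /mxget (insubT (fun k => k < p)%N (ltn_ord i)).
rewrite (insubT (fun k => k < q)%N (ltn_ord j)).
by congr (X _ _); apply: val_inj.
Qed.

Section GeneralFacts.
Variable F : fieldType.

Lemma sum_rows_delta m n (M : 'M[F]_(m, n)) :
  \sum_(i < m) delta_mx i 0 *m row i M = M.
Proof.
apply/matrixP => r c; rewrite -[in RHS](mul1mx M) summxE !mxE.
by apply: eq_bigr => i _; rewrite !mxE big_ord1 !mxE eqxx andbT.
Qed.

Lemma sum_prefix_rows m n p (hp : (p <= m)%N) (M : 'M[F]_(m, n)) :
  (forall i : 'I_m, (p <= i)%N -> row i M = 0) ->
  \sum_(k < p) delta_mx (widen_ord hp k) 0 *m row (widen_ord hp k) M = M.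
Proof.
move=> M0; rewrite -(big_ord_narrow (F := fun i => delta_mx i 0 *m row i M) hp).
rewrite -[RHS]sum_rows_delta [RHS](bigID (fun i : 'I_m => (i < p)%N)) /=.
by rewrite [X in _ = _ + X]big1 ?addr0 // => i; rewrite -leqNgt => /M0 ->; rewrite mulmx0.
Qed.

Lemma unitmx_row_neq0 p (X : 'M[F]_p) (i : 'I_p) : X \in unitmx -> row i X != 0.
Proof.
move=> uX; apply/eqP => Xi0.
have := congr1 (mulmx^~ (invmx X)) Xi0; rewrite -row_mul mulmxV // mul0mx row1.
by move/rowP/(_ i); rewrite !mxE !eqxx => /eqP; rewrite oner_eq0.
Qed.

Lemma mxrank_mxsub m n m' n' (f : 'I_m' -> 'I_m) (g : 'I_n' -> 'I_n) (M : 'M[F]_(m, n)) :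
  (\rank (mxsub f g M) <= \rank M)%N.
Proof.
rewrite mxsubrc rowsubE -[M in colsub g M]mulmx1 -mulmx_colsub.
exact: leq_trans (mxrankM_maxr _ _) (mxrankM_maxl _ _).
Qed.

Lemma rank_zero_rows R q p (K : 'I_p -> 'I_R) (Z : 'M[F]_(R, q)) :
  injective K -> (forall i, row (K i) Z = 0) -> (\rank Z + p <= R)%N.
Proof.
move=> injK ZK; pose E := rowsub K (1%:M : 'M[F]_R).
have EZ : E *m Z = 0 by apply/row_matrixP => i; rewrite -rowsubE row_rowsub ZK row0.
have EEt : E *m E^T = 1%:M.
  apply/matrixP => i j; rewrite !mxE (bigD1 (K i)) //= big1 => [|t /negbTE tKi].
    by rewrite !mxE eqxx mul1r (inj_eq injK) addr0 eq_sym.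
  by rewrite !mxE eq_sym tKi mul0r.
have rkE : \rank E = p.
  apply/eqP; rewrite eqn_leq rank_leq_row -{1}(mxrank1 F p) -EEt.
  exact: mxrankM_maxl.
have := mxrank_mul_min E Z; rewrite EZ mxrank0 leqn0 subn_eq0 rkE.
by rewrite addnC.
Qed.

Lemma rank1_sum_factor m n R (a : 'I_R -> 'cV[F]_m) (b : 'I_R -> 'cV[F]_n)
    (c : 'I_R -> F) :
  \sum_k c k *: (a k *m (b k)^T)
  = \matrix_(i, k) a k i 0 *m diag_mx (\row_k c k) *m \matrix_k (b k)^T.
Proof.
apply/matrixP => i j; rewrite summxE mxE; apply: eq_bigr => k _.
by rewrite mul_mx_diag !mxE big_ord1 !mxE mulrCA mulrA.
Qed.

Lemma tensor_rank_le_add m n (A1 B1 A2 B2 : 'M[F]_(m, n)) r1 r2 :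
  tensor_rank_le A1 B1 r1 -> tensor_rank_le A2 B2 r2 ->
  tensor_rank_le (A1 + A2) (B1 + B2) (r1 + r2).
Proof.
move=> [a1 [b1 [al1 [be1 [nz1 [eA1 eB1]]]]]] [a2 [b2 [al2 [be2 [nz2 [eA2 eB2]]]]]].
pose glue T (f1 : 'I_r1 -> T) (f2 : 'I_r2 -> T) k :=
  match split k with inl i => f1 i | inr j => f2 j end.
exists (glue _ a1 a2), (glue _ b1 b2), (glue _ al1 al2), (glue _ be1 be2).
split; first by move=> k; rewrite /glue; case: split.
rewrite !big_split_ord /= eA1 eB1 eA2 eB2 /glue.
by split; congr (_ + _); apply: eq_bigr => k _; rewrite ?split_lshift ?split_rshift.
Qed.

Lemma tensor_rank_le_rows m n p (hp : (p <= m)%N) (al be : F) (M : 'M[F]_(m, n)) :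
  (al != 0) || (be != 0) ->
  (forall i : 'I_p, row (widen_ord hp i) M != 0) ->
  (forall i : 'I_m, (p <= i)%N -> row i M = 0) ->
  tensor_rank_le (al *: M) (be *: M) p.
Proof.
move=> albe nzM M0; pose w := widen_ord hp.
exists (fun k => delta_mx (w k) 0), (fun k => (row (w k) M)^T), (fun=> al), (fun=> be).
split=> [k|].
  have nz_delta : delta_mx (w k) 0 != 0 :> 'cV[F]_m.
    by apply/eqP => /matrixP/(_ (w k) 0); rewrite !mxE !eqxx => /eqP; rewrite oner_eq0.
  by split; rewrite ?trmx_eq0.
rewrite -{1 3}(sum_prefix_rows hp M0) !scaler_sumr.
by split; apply: eq_bigr => k _; rewrite trmxK.
Qed.

(* The substitution method: removing p directions of A's column space along
   a full-rank A C costs at least p rank-one terms. *)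
Lemma substitution_bound m n p R (A B : 'M[F]_(m, n)) (C : 'M[F]_(n, p)) :
  tensor_rank_le A B R -> \rank (A *m C) = p ->
  exists Yx : 'M_(p, n),
    (\rank (row_mx (A - A *m C *m Yx) (B - B *m C *m Yx)) + p <= R)%N.
Proof.
move=> [a [b [al [be [_ [-> ->]]]]]]; rewrite !rank1_sum_factor.
set U := \matrix_(i, k) a k i 0; set V := \matrix_k (b k)^T.
set Da := diag_mx (\row_k al k); set Db := diag_mx (\row_k be k) => rkAC.
pose W := V *m C.
have fullW : row_full W.
  rewrite /row_full eqn_leq rank_leq_col -{1}rkAC -!mulmxA.
  exact: leq_trans (mxrankM_maxr _ _) (mxrankM_maxr _ _).
pose K := fullrankfun fullW; pose S := rowsub K W.
have uS : S \in unitmx := fullrowsub_unit fullW.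
pose Yx := invmx S *m rowsub K V; exists Yx.
pose V' := V - W *m Yx.
have V'K i : row (K i) V' = 0.
  rewrite /V' linearB /= row_mul -[row (K i) W]row_rowsub -/S /Yx mulmxA -row_mul.
  by rewrite mulmxV // -row_mul mul1mx row_rowsub subrr.
have eD (D : 'M[F]_R) : U *m D *m V - U *m D *m V *m C *m Yx = U *m (D *m V').
  by rewrite /V' /W !mulmxBr !mulmxA.
rewrite !eD -mul_mx_row; apply: leq_trans (leq_add (mxrankM_maxr _ _) (leqnn p)) _.
apply: (rank_zero_rows (@fullrankfun_inj _ _ _ _ fullW)) => i.
by rewrite row_row_mx !row_mul !row_diag_mx -!scalemxAl -!rowE V'K !scaler0 row_mx0.
Qed.

End GeneralFacts.

Section Theorem7.
Variables (F : fieldType) (m n l : nat).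
Hypotheses (m_le_n : (m <= n)%N) (n_le_ml : (n <= m + l)%N) (ll_le_n : (l + l <= n)%N).
Variables (X11 : 'M[F]_(n - l)) (X12 : 'M[F]_(n - l, m + l - n))
          (X22 : 'M[F]_(m + l - n)) (Y : 'M[F]_l).
Hypotheses (uX11 : X11 \in unitmx) (uX22 : X22 \in unitmx) (uY : Y \in unitmx).

Local Notation q := (m + l - n)%N.
Local Notation A := (matA X11 X12 X22).
Local Notation B := (matB m n Y).

Fact l_le_m : (l <= m)%N. Proof. lia. Qed.

Lemma matA_X11 (i : 'I_m) (j : 'I_n) (i' j' : 'I_(n - l)) :
  val i = i' -> val j = j' -> A i j = X11 i' j'.
Proof. by move=> ei ej; rewrite mxE ei ej !ltn_ord; apply: mxget_val. Qed.

Lemma matA_lower_left (i : 'I_m) (j : 'I_n) :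
  (n - l <= i)%N -> (j < n - l)%N -> A i j = 0.
Proof. by move=> hi hj; rewrite mxE ltnNge hi /= leqNgt hj. Qed.

Lemma matA_X22 (i : 'I_m) (j : 'I_n) (i' j' : 'I_q) :
  val i = (n - l + i')%N -> val j = (n - l + j')%N -> A i j = X22 i' j'.
Proof.
move=> ei ej; have := ltn_ord j'.
rewrite mxE ei ej (ltnNge (n - l + i')) leq_addr /= leq_addr /= => hj'.
have -> : (n - l + j' < m)%N by lia.
by rewrite !addKn; apply: mxget_val.
Qed.

Lemma matB_Y (i : 'I_m) (j : 'I_n) (i' j' : 'I_l) :
  val i = i' -> val j = (n - l + j')%N -> B i j = Y i' j'.
Proof. by move=> ei ej; rewrite mxE ei ej ltn_ord leq_addr addKn; apply: mxget_val. Qed.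

Lemma matB_lower (i : 'I_m) (j : 'I_n) : (l <= i)%N -> B i j = 0.
Proof. by move=> hi; rewrite mxE ltnNge hi. Qed.

Lemma matB_left (i : 'I_m) (j : 'I_n) : (j < n - l)%N -> B i j = 0.
Proof. by move=> hj; rewrite mxE (leqNgt (n - l)) hj andbF. Qed.

(* Every row of A is nonzero: it contains a row of X11 or of X22. *)
Lemma row_matA_neq0 (i : 'I_m) : row i A != 0.
Proof.
have A0 (j : 'I_n) : row i A = 0 -> A i j = 0 by move/rowP/(_ j); rewrite !mxE.
have := ltn_ord i; case: (ltnP i (n - l)) => hi lt_i_m.
  apply: contra (unitmx_row_neq0 (Ordinal hi) uX11) => /eqP Ai0.
  apply/eqP/rowP => j'; have hj : (j' < n)%N by have := ltn_ord j'; lia.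
  by rewrite !mxE -(@matA_X11 i (Ordinal hj)) ?A0.
have hi' : (i - (n - l) < q)%N by lia.
apply: contra (unitmx_row_neq0 (Ordinal hi') uX22) => /eqP Ai0.
apply/eqP/rowP => j'; have hj : (n - l + j' < n)%N by have := ltn_ord j'; lia.
by rewrite !mxE -(@matA_X22 i (Ordinal hj)) ?A0 //=; lia.
Qed.

(* The first l rows of B are nonzero (they contain the rows of Y) ... *)
Lemma row_matB_neq0 (i : 'I_l) : row (widen_ord l_le_m i) B != 0.
Proof.
apply: contra (unitmx_row_neq0 i uY) => /eqP Bi0.
have B0 (j : 'I_n) : B (widen_ord l_le_m i) j = 0.
  by move/rowP: Bi0 => /(_ j); rewrite !mxE.
apply/eqP/rowP => j'; have hj : (n - l + j' < n)%N by have := ltn_ord j'; lia.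
by rewrite !mxE -(@matB_Y (widen_ord l_le_m i) (Ordinal hj)) ?B0.
Qed.

Lemma row_matB_lower (i : 'I_m) : (l <= i)%N -> row i B = 0.
Proof. by move=> hi; apply/rowP => j; rewrite mxE matB_lower ?mxE. Qed.

Lemma matAB_rank_le : tensor_rank_le A B (m + l).
Proof.
have rkA : tensor_rank_le (1 *: A) (0 *: A) m.
  apply: (tensor_rank_le_rows (hp := leqnn m)) => [|i|i]; rewrite ?oner_eq0 //.
    exact: row_matA_neq0.
  by rewrite leqNgt ltn_ord.
have rkB : tensor_rank_le (0 *: B) (1 *: B) l.
  apply: (tensor_rank_le_rows (hp := l_le_m)) => [|i|i]; rewrite ?oner_eq0 ?orbT //.
    exact: row_matB_neq0.
  exact: row_matB_lower.
by have := tensor_rank_le_add rkA rkB; rewrite !scale1r !scale0r addr0 add0r.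
Qed.

Let C : 'M[F]_(n, n - l) := colsub (widen_ord (leq_subr l n)) 1%:M.

Lemma first_cols (M : 'M[F]_(m, n)) : M *m C = colsub (widen_ord (leq_subr l n)) M.
Proof. by rewrite mulmx_colsub mulmx1. Qed.

(* A C contains X11, so it has full column rank n - l ... *)
Lemma rank_matA_first_cols : \rank (A *m C) = (n - l)%N.
Proof.
have hnm : (n - l <= m)%N by lia.
have eX11 : rowsub (widen_ord hnm) (A *m C) = X11.
  by apply/matrixP => i j; rewrite first_cols [LHS]mxE [LHS]mxE; apply: matA_X11.
apply/eqP; rewrite eqn_leq rank_leq_col /=.
have := mxrankM_maxr (rowsub (widen_ord hnm) 1%:M) (A *m C).
by rewrite -rowsubE eX11 mxrank_unit.
Qed.

Lemma matA_first_cols_lower (i : 'I_m) (j : 'I_(n - l)) :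
  (n - l <= i)%N -> (A *m C) i j = 0.
Proof. by move=> hi; rewrite first_cols [LHS]mxE matA_lower_left //= ltn_ord. Qed.

Lemma matB_first_cols : B *m C = 0.
Proof. by apply/matrixP => i j; rewrite first_cols [LHS]mxE matB_left ?mxE //= ltn_ord. Qed.

(* Whatever Yx is, the residual [A - A C Yx | B] contains the block upper
   triangular submatrix [Y * ; 0 X22] (rows 0..l-1 and n-l..m-1; columns of
   Y in B and of X22 in A), hence has rank at least l + q. *)
Lemma residual_rank (Yx : 'M[F]_(n - l, n)) :
  (l + q <= \rank (row_mx (A - A *m C *m Yx) B))%N.
Proof.
set N := row_mx _ _.
have e_m : (n - l + q = m)%N by lia.
have e_n : (n - l + l = n)%N by lia.
have le_n : (n - l + q <= n)%N by lia.
pose ri (k : 'I_(l + q)) : 'I_m := match split k with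
  | inl i => widen_ord l_le_m i | inr j => cast_ord e_m (rshift (n - l) j) end.
pose ci (k : 'I_(l + q)) : 'I_(n + n) := match split k with
  | inl i => rshift n (cast_ord e_n (rshift (n - l) i))
  | inr j => lshift n (widen_ord le_n (rshift (n - l) j)) end.
have eS : mxsub ri ci N = block_mx Y (ursubmx (mxsub ri ci N)) 0 X22.
  apply/matrixP => i j; case: (split_ordP i) => i' ->; case: (split_ordP j) => j' ->.
  - by rewrite block_mxEul [LHS]mxE /ri /ci !split_lshift row_mxEr; apply: matB_Y.
  - by rewrite block_mxEur !mxE.
  - rewrite block_mxEdl [LHS]mxE /ri /ci split_rshift split_lshift row_mxEr.
    by rewrite matB_lower ?mxE //=; lia.
  - rewrite block_mxEdr [LHS]mxE /ri /ci !split_rshift row_mxEl [LHS]mxE.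
    rewrite (matA_X22 (i' := i') (j' := j')) // [X in _ + X]mxE [X in - X]mxE.
    rewrite big1 ?oppr0 ?addr0 // => k _.
    by rewrite matA_first_cols_lower ?mul0r //= leq_addr.
have rkS : \rank (mxsub ri ci N) = (l + q)%N.
  by rewrite eS mxrank_unit // unitmxE det_ublock unitrM -!unitmxE uY uX22.
by rewrite -rkS mxrank_mxsub.
Qed.

Lemma matAB_rank_ge R : tensor_rank_le A B R -> (m + l <= R)%N.
Proof.
move=> rkR; have [Yx] := substitution_bound rkR rank_matA_first_cols.
rewrite matB_first_cols mul0mx subr0 => hR.
by have := residual_rank Yx; lia.
Qed.

End Theorem7.

Lemma thm7_field (F : fieldType) : thm7_prop F.
Proof.
move=> m n l m_le_n n_le_2m nm_le_l l_le_half X11 X12 X22 Y uX11 uX22 uY.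
have n_le_ml : (n <= m + l)%N by lia.
have ll_le_n : (l + l <= n)%N by lia.
split; first exact: matAB_rank_le.
by move=> r; apply: matAB_rank_ge.
Qed.

Theorem mainTheorem7 :
  (forall R : rcfType, thm7_prop R) /\ (forall C : numClosedFieldType, thm7_prop C).
Proof. by split => F; apply: thm7_field. Qed.
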